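(* Let $\gamma\ge1$ and let $\alpha,\beta$ be positive constants with $-1<\alpha\le\beta$. Then $$\alpha^2\le\frac{\mathcal{Q}\big((\alpha+1)^{2/\gamma}\big)}{\zeta(\beta,\gamma)},$$ where $\mathcal{Q}(h)=\frac1\gamma\int_1^h(s^{\gamma-2}-s^{-2})\,ds$ and $\zeta(\beta,\gamma)=\frac{1}{\gamma^2}\big\{(\beta+1)^{-\frac2\gamma}+(\beta+1)^{-\frac2\gamma-1}\big\}$. *)

From Stdlib Require Import Reals.
From Coquelicot Require Import Coquelicot.
Open Scope R_scope.

Definition Qfun (gamma h : R) : R :=
  / gamma * RInt (fun s => Rpower s (gamma - 2) - Rpower s (-2)) 1 h.

Definition zeta (beta gamma : R) : R :=
  / (gamma ^ 2) * (Rpower (beta + 1) (- 2 / gamma) + Rpower (beta + 1) (- 2 / gamma - 1)).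

From Stdlib Require Import Reals Lra.
From Coquelicot Require Import Coquelicot.
Open Scope R_scope.

(* Write a = alpha + 1 and h = a^(2/gamma).  On [1, h] the integrand of Q is
   nonnegative and s/h <= 1, so it dominates (s/h)(s^(gamma-2) - s^(-2)), which
   has an elementary antiderivative; this gives
   Q(h) >= gamma^-2 a^(-2/gamma) (a^2 - 1 - 2 ln a).  On the other side zeta
   decreases in beta, so zeta(beta, gamma) <= zeta(alpha, gamma)
   = gamma^-2 a^(-2/gamma) (1 + 1/a), and alpha^2 (1 + 1/a) <= a^2 - 1 - 2 ln a
   is exactly the classical bound ln a <= (a - 1/a)/2 for a >= 1. *)

Lemma is_derive_Rpower (y x : R) :
  0 < x -> is_derive (fun s => Rpower s y) x (y * Rpower x (y - 1)).
Proof.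
  intros Hx. apply is_derive_Reals, derivable_pt_lim_power, Hx.
Qed.

Lemma continuous_Rpower (y x : R) : 0 < x -> continuous (fun s => Rpower s y) x.
Proof.
  intros Hx. apply (ex_derive_continuous (fun s => Rpower s y)).
  exists (y * Rpower x (y - 1)).
  apply is_derive_Rpower, Hx.
Qed.

Lemma ln_le_half_sub_inv (a : R) : 1 <= a -> ln a <= (a - / a) / 2.
Proof.
  intros Ha.
  set (f := fun s => (s - / s) / 2 - ln s).
  destruct (MVT_gen f 1 a (fun s => (1 - / s) * (1 - / s) / 2)) as [c [Hc Hmvt]];
    rewrite Rmin_left, Rmax_right in * by lra.
  - intros x Hx. unfold f. auto_derive; [lra | field; lra].
  - intros x Hx. apply continuity_pt_filterlim, (ex_derive_continuous f).
    unfold f. auto_derive. lra.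
  - assert (Hf1 : f 1 = 0) by (unfold f; rewrite ln_1; field).
    assert (0 <= (1 - / c) * (1 - / c)) by apply Rle_0_sqr.
    assert (0 <= f a) by nra.
    unfold f in *. lra.
Qed.

Lemma Rpower_sub_inv_le (g h s : R) : 0 <= g -> 1 <= s <= h ->
  / h * (Rpower s (g - 1) - / s) <= Rpower s (g - 2) - Rpower s (-2).
Proof.
  intros Hg Hs.
  assert (Hpow : Rpower s (g - 1) = s * Rpower s (g - 2)).
  { replace (g - 1) with (1 + (g - 2)) by ring. rewrite Rpower_plus, Rpower_1 by lra.
    reflexivity. }
  assert (Hinv : / s = s * Rpower s (-2)).
  { rewrite <- (Rpower_1 s) at 1 by lra. rewrite <- Rpower_Ropp.
    replace (- (1)) with (1 + -2) by ring. rewrite Rpower_plus, Rpower_1 by lra.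
    reflexivity. }
  assert (Hmono : Rpower s (-2) <= Rpower s (g - 2)) by (apply Rle_Rpower; lra).
  assert (Hsh : s * / h <= 1).
  { apply (Rmult_le_reg_r h); [lra |]. field_simplify; lra. }
  assert (0 <= s * / h) by (apply Rmult_le_pos; [| apply Rlt_le, Rinv_0_lt_compat]; lra).
  rewrite Hpow, Hinv. nra.
Qed.

Lemma is_RInt_Rpower_sub_inv (g h : R) : 0 < g -> 1 <= h ->
  is_RInt (fun s => Rpower s (g - 1) - / s) 1 h ((Rpower h g - 1) / g - ln h).
Proof.
  intros Hg Hh.
  set (F := fun s => Rpower s g / g - ln s).
  replace ((Rpower h g - 1) / g - ln h) with (minus (F h) (F 1)).
  2: { unfold F, minus, plus, opp, Rpower; simpl. rewrite ln_1, Rmult_0_r, exp_0.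
       field. lra. }
  apply (@is_RInt_derive R_CompleteNormedModule);
    rewrite Rmin_left, Rmax_right by lra; intros x Hx.
  - unfold F. auto_derive.
    + split; [exists (g * Rpower x (g - 1)); apply is_derive_Rpower |]; lra.
    + replace (Derive (fun s => Rpower s g) x) with (g * Rpower x (g - 1))
        by (symmetry; apply is_derive_unique, is_derive_Rpower; lra).
      field. lra.
  - apply (ex_derive_continuous (fun s => Rpower s (g - 1) - / s)). auto_derive.
    split; [exists ((g - 1) * Rpower x (g - 1 - 1)); apply is_derive_Rpower |]; lra.
Qed.

Lemma Qfun_ge (g h : R) : 0 < g -> 1 <= h ->
  / (g * h) * ((Rpower h g - 1) / g - ln h) <= Qfun g h.
Proof.
  intros Hg Hh. unfold Qfun.
  replace (/ (g * h) * ((Rpower h g - 1) / g - ln h))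
    with (/ g * (/ h * ((Rpower h g - 1) / g - ln h))) by (field; lra).
  apply Rmult_le_compat_l; [apply Rlt_le, Rinv_0_lt_compat, Hg |].
  assert (Hint : is_RInt (fun s => / h * (Rpower s (g - 1) - / s)) 1 h
                  (/ h * ((Rpower h g - 1) / g - ln h)))
    by exact (is_RInt_scal _ _ _ (/ h) _ (is_RInt_Rpower_sub_inv g h Hg Hh)).
  rewrite <- (is_RInt_unique _ _ _ _ Hint).
  apply RInt_le; [lra | eexists; exact Hint | |].
  - apply (@ex_RInt_continuous R_CompleteNormedModule).
    rewrite Rmin_left, Rmax_right by lra. intros s Hs.
    apply (continuous_minus (fun s => Rpower s (g - 2)) (fun s => Rpower s (-2)));
      apply continuous_Rpower; lra.
  - intros s Hs. apply Rpower_sub_inv_le; lra.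
Qed.

Lemma Qfun_Rpower_ge (g a : R) : 0 < g -> 1 <= a ->
  / g ^ 2 * Rpower a (- 2 / g) * (a * a - 1 - 2 * ln a) <= Qfun g (Rpower a (2 / g)).
Proof.
  intros Hg Ha.
  set (h := Rpower a (2 / g)).
  assert (Hh : 1 <= h).
  { unfold h. rewrite <- (Rpower_O a) by lra.
    apply Rle_Rpower; [lra | apply Rdiv_le_0_compat; lra]. }
  assert (Hhg : Rpower h g = a * a).
  { unfold h. rewrite Rpower_mult. replace (2 / g * g) with (INR 2) by (simpl; field; lra).
    rewrite Rpower_pow by lra. ring. }
  assert (Hinv : / h = Rpower a (- 2 / g)).
  { unfold h. rewrite <- Rpower_Ropp. f_equal. field. lra. }
  assert (Hlnh : ln h = 2 / g * ln a) by apply ln_Rpower.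
  eapply Rle_trans; [| apply Qfun_ge; assumption].
  right. rewrite Hhg, Hlnh, Rinv_mult, Hinv. field. lra.
Qed.

Lemma Rpower_le_base_nonpos (x y c : R) : c <= 0 -> 0 < x <= y -> Rpower y c <= Rpower x c.
Proof.
  intros Hc Hxy. replace c with (- (- c)) by ring.
  rewrite (Rpower_Ropp y (- c)), (Rpower_Ropp x (- c)).
  apply Rinv_le_contravar; [apply exp_pos | apply Rle_Rpower_l; lra].
Qed.

Lemma zeta_gt0 (b g : R) : g <> 0 -> 0 < zeta b g.
Proof.
  intros Hg. unfold zeta, Rpower.
  apply Rmult_lt_0_compat; [apply Rinv_0_lt_compat, pow2_gt_0, Hg |].
  apply Rplus_lt_0_compat; apply exp_pos.
Qed.

Lemma zeta_antitone (b b' g : R) : 0 < g -> -1 < b -> b <= b' -> zeta b' g <= zeta b g.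
Proof.
  intros Hg Hb Hbb'. unfold zeta.
  assert (Hexp : - 2 / g <= 0)
    by (unfold Rdiv; pose proof (Rinv_0_lt_compat g Hg); lra).
  apply Rmult_le_compat_l; [apply Rlt_le, Rinv_0_lt_compat, pow2_gt_0; lra |].
  apply Rplus_le_compat; apply Rpower_le_base_nonpos; lra.
Qed.

Lemma zeta_eq_factor (b g : R) : -1 < b ->
  zeta b g = / g ^ 2 * Rpower (b + 1) (- 2 / g) * (1 + / (b + 1)).
Proof.
  intros Hb. unfold zeta.
  replace (- 2 / g - 1) with (- 2 / g + - (1)) by ring.
  rewrite Rpower_plus, Rpower_Ropp, Rpower_1 by lra. ring.
Qed.

Lemma sqr_mul_zeta_le_Qfun (g b : R) : 0 < g -> 0 <= b ->
  b ^ 2 * zeta b g <= Qfun g (Rpower (b + 1) (2 / g)).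
Proof.
  intros Hg Hb.
  eapply Rle_trans; [| apply Qfun_Rpower_ge; lra].
  rewrite zeta_eq_factor by lra.
  set (K := / g ^ 2 * Rpower (b + 1) (- 2 / g)).
  assert (HK : 0 <= K).
  { apply Rmult_le_pos; [apply Rlt_le, Rinv_0_lt_compat, pow2_gt_0; lra |].
    apply Rlt_le, exp_pos. }
  assert (Hfac : b ^ 2 * (1 + / (b + 1))
                 = (b + 1) * (b + 1) - 1 - 2 * (((b + 1) - / (b + 1)) / 2))
    by (field; lra).
  pose proof (ln_le_half_sub_inv (b + 1) ltac:(lra)) as Hln.
  replace (b ^ 2 * (K * (1 + / (b + 1)))) with (K * (b ^ 2 * (1 + / (b + 1)))) by ring.
  rewrite Hfac. apply Rmult_le_compat_l; lra.
Qed.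

Theorem propositionB1 (gamma alpha beta : R)
  (hgamma : 1 <= gamma) (halpha : 0 < alpha) (hbeta : 0 < beta)
  (halpha1 : -1 < alpha) (hab : alpha <= beta) :
  alpha ^ 2 <= Qfun gamma (Rpower (alpha + 1) (2 / gamma)) / zeta beta gamma.
Proof.
  apply (Rle_div_r _ _ _ (zeta_gt0 beta gamma ltac:(lra))).
  apply Rle_trans with (alpha ^ 2 * zeta alpha gamma).
  - apply Rmult_le_compat_l; [apply pow2_ge_0 | apply zeta_antitone; lra].
  - apply sqr_mul_zeta_le_Qfun; lra.
Qed.
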